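(* Let $n\ge 3$ be odd. Then the row span $[C]$ of the cyclic matrix $C$ is the unique minimizer of $E$ on $Gr^{>0}(2,n)$.
   Context: For a real $2\times n$ matrix $X$ and $1\le i<j\le n$, $\Delta_{i,j}(X)$ is the determinant of the $2\times2$ submatrix of columns $i,j$. $Gr^{>0}(2,n)$ is the set of 2-dimensional subspaces of $\mathbb{R}^n$ having a spanning $2\times n$ matrix $X$ (rows spanning the subspace) with $\Delta_{i,j}(X)>0$ for all $i<j$; $E(x)=\max_{i<j}\Delta_{i,j}(X)/\min_{i<j}\Delta_{i,j}(X)$ (independent of the choice of $X$). The cyclic matrix $C$ is the $2\times n$ matrix whose $m$-th column is $(\cos((m-1)\pi/n),\sin((m-1)\pi/n))^T$, $m=1,\dots,n$. *)

From HB Require Import structures.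
From mathcomp Require Import all_boot all_order all_algebra.
From mathcomp Require Import all_classical all_reals all_analysis.
Set Implicit Arguments. Unset Strict Implicit. Unset Printing Implicit Defensive.
Import Order.TTheory GRing.Theory Num.Theory.
Local Open Scope ring_scope.

Definition plucker (R : realType) (n : nat) (X : 'M[R]_(2, n)) (i j : 'I_n) : R :=
  X 0 i * X 1 j - X 0 j * X 1 i.

(* X spans a point of Gr^{>0}(2,n): all Delta_{i,j}(X) > 0 for i < j. *)
Definition totally_positive (R : realType) (n : nat) (X : 'M[R]_(2, n)) : Prop :=
  forall i j : 'I_n, (i < j)%N -> 0 < plucker X i j.

(* max and min of Delta_{i,j}(X) over i < j.  The min is started at the max,
   which does not change its value since the index set is nonempty when n >= 2. *)
Definition max_plucker (R : realType) (n : nat) (X : 'M[R]_(2, n)) : R :=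
  \big[Num.max/0]_(p : 'I_n * 'I_n | (p.1 < p.2)%N) plucker X p.1 p.2.

Definition min_plucker (R : realType) (n : nat) (X : 'M[R]_(2, n)) : R :=
  \big[Num.min/max_plucker X]_(p : 'I_n * 'I_n | (p.1 < p.2)%N) plucker X p.1 p.2.

Definition Eratio (R : realType) (n : nat) (X : 'M[R]_(2, n)) : R :=
  max_plucker X / min_plucker X.

(* Cyclic matrix: column m (1-based) is (cos((m-1)pi/n), sin((m-1)pi/n)).
   With 0-based column index j this is angle j*pi/n. *)
Definition cyclicC (R : realType) (n : nat) : 'M[R]_(2, n) :=
  \matrix_(i < 2, j < n)
    (if i == 0 then cos ((j%:R * pi) / n%:R) else sin ((j%:R * pi) / n%:R)).

From HB Require Import structures.
From mathcomp Require Import all_boot all_order all_algebra.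
From mathcomp Require Import all_classical all_reals all_analysis.
From mathcomp Require Import ring lra zify.
Import Order.TTheory GRing.Theory Num.Theory.
Local Open Scope ring_scope.

(* Let X be totally positive with m = min Delta(X), M = max Delta(X).  Extending the
   columns of X anti-periodically (column t + n = - column t), the chords
   a_d(s) = Delta_{s, s+d} become n-periodic in s, and for 0 < d < n each chord is a
   Pluecker coordinate of X, so m <= a_d(s) <= M.  The three-term Pluecker relation
     a_d(s) a_d(s+1) = a_1(s) a_1(s+d) + a_(d+1)(s) a_(d-1)(s+1)
   combined with the superadditivity of the geometric mean shows that the geometric
   means G_d of the chords satisfy G_d^2 >= m^2 + G_(d+1) G_(d-1).  The profile
   r_d = G_d / m (with r_0 = r_n = 0) thus satisfies r_d^2 - r_(d+1) r_(d-1) >= 1,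
   while c_d = sin (d pi / n) / sin (pi / n) satisfies it with equality, so a discrete
   minimum principle gives r >= c; hence M >= G_(n/2) >= m c_(n/2) = m E(C).
   If E(X) = E(C), all these inequalities are tight: every chord is constant in s and
   equal to m c_d, so the Pluecker coordinates of X and C are proportional and the
   row spaces coincide. *)

(* sinfrac n d = sin (d pi / n): the Pluecker coordinate of C on columns at distance d. *)
Definition sinfrac (R : realType) (n d : nat) : R := sin ((d%:R * pi) / n%:R).

Section SineValues.
Context {R : realType} {n : nat}.

Lemma sinfrac_gt0 d : (0 < d < n)%N -> 0 < sinfrac R n d.
Proof.
case/andP=> d_gt0 dn; have n_gt0 : (0 < n)%N by apply: leq_trans dn.
apply: sin_gt0_pi; apply/andP; split.
  by rewrite divr_gt0 ?mulr_gt0 ?ltr0n ?pi_gt0.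
by rewrite ltr_pdivrMr ?ltr0n // mulrC ltr_pM2l ?pi_gt0 // ltr_nat.
Qed.

Lemma sinfrac0 : sinfrac R n 0 = 0.
Proof. by rewrite /sinfrac mul0r mul0r sin0. Qed.

(* The defining relation of the sequence c_d = sinfrac d / sinfrac 1 below:
   s_d^2 - s_(d+1) s_(d-1) = s_1^2, from sin(x+y) sin(x-y) = sin^2 x - sin^2 y. *)
Lemma sinfrac_recurrence d : (0 < d)%N ->
  sinfrac R n d ^+ 2 - sinfrac R n d.+1 * sinfrac R n d.-1 = sinfrac R n 1 ^+ 2.
Proof.
case: d => [//|d] _ /=; rewrite /sinfrac.
set x := (d.+1%:R * pi) / n%:R; set y := (1%:R * pi) / n%:R.
have -> : (d.+2%:R * pi) / n%:R = x + y by rewrite -addn1 natrD !mulrDl.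
have -> : (d%:R * pi) / n%:R = x - y by rewrite /x -addn1 natrD !mulrDl addrK.
have cx := cos2sin2 x; have cy := cos2sin2 y.
by rewrite sinD sinB; nra.
Qed.

Hypothesis n_gt0 : (0 < n)%N.

Let n_neq0 : (n%:R : R) != 0. Proof. by rewrite pnatr_eq0 -lt0n. Qed.

Lemma sinfrac_n : sinfrac R n n = 0.
Proof. by rewrite /sinfrac mulrAC mulfV // mul1r sinpi. Qed.

Lemma sinfracB d : (d <= n)%N -> sinfrac R n (n - d) = sinfrac R n d.
Proof.
move=> dn; rewrite /sinfrac natrB // !mulrBl [n%:R * _ / _]mulrAC mulfV // mul1r.
by rewrite sinB sinpi cospi mul0r mulN1r opprK add0r.
Qed.

(* sin is increasing on [0, pi/2], i.e. d |-> sinfrac n d on d <= n/2. *)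
Lemma sinfrac_le a b : (a <= b)%N -> (b.*2 <= n)%N -> sinfrac R n a <= sinfrac R n b.
Proof.
move=> ab b2n; rewrite /sinfrac.
have angle_in c : (c <= b)%N -> ((c%:R * pi) / n%:R : R) \in `[- (pi / 2), pi / 2].
  move=> cb; have pi_pos := pi_gt0 R.
  have c_half : c%:R <= n%:R / 2 :> R.
    by rewrite ler_pdivlMr // -natrM ler_nat muln2 (leq_trans _ b2n) ?leq_double.
  have c_pi : c%:R * pi <= n%:R / 2 * pi :> R by rewrite (ler_pM2r pi_pos).
  have c_pi_ge0 : 0 <= c%:R * pi :> R by rewrite mulr_ge0 ?ler0n ?pi_ge0.
  rewrite in_itv /= ler_pdivrMr ?ltr0n // ler_pdivlMr ?ltr0n //.
  by apply/andP; split; lra.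
rewrite le_eqVlt; case: (ltngtP a b) ab => // [ab _|-> _]; last by rewrite eqxx.
apply/orP; right; rewrite ltr_sin ?angle_in ?(ltnW ab) //.
by rewrite ltr_pM2r ?invr_gt0 ?ltr0n // ltr_pM2r ?pi_gt0 // ltr_nat.
Qed.

End SineValues.

Lemma sinfrac_bounds {R : realType} {n : nat} (d : nat) : odd n -> (0 < d < n)%N ->
  sinfrac R n 1 <= sinfrac R n d <= sinfrac R n n./2.
Proof.
move=> n_odd /andP [d_gt0 dn].
have n_eq : n = (n./2).*2.+1 by rewrite -{1}(odd_double_half n) n_odd.
have n_gt0 : (0 < n)%N by lia.
case: (leqP d n./2) => dk; last rewrite -(sinfracB n_gt0 d (ltnW dn)).
all: by apply/andP; split; apply: (sinfrac_le n_gt0); lia.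
Qed.

Lemma plucker_bounds {R : realType} {n : nat} (X : 'M[R]_(2, n)) (i j : 'I_n) :
  (i < j)%N -> min_plucker X <= plucker X i j <= max_plucker X.
Proof.
move=> ij; apply/andP; split.
  exact: (@bigmin_le_cond _ _ _ _ (i, j) (fun p : 'I_n * 'I_n => (p.1 < p.2)%N)
    (fun p => plucker X p.1 p.2)).
exact: (@le_bigmax_cond _ _ _ _ (i, j) (fun p : 'I_n * 'I_n => (p.1 < p.2)%N)
    (fun p => plucker X p.1 p.2)).
Qed.

Lemma min_plucker_gt0 {R : realType} {n : nat} (X : 'M[R]_(2, n)) :
  (1 < n)%N -> totally_positive X -> 0 < min_plucker X.
Proof.
move=> n_gt1 tpX; have n_gt0 : (0 < n)%N by lia.
have h01 := tpX (Ordinal n_gt0) (Ordinal n_gt1) isT.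
rewrite /min_plucker; apply: lt_bigmin => [|[i j] /= ij]; last exact: tpX.
by case/andP: (plucker_bounds X (Ordinal n_gt0) (Ordinal n_gt1) isT) => _; apply: lt_le_trans.
Qed.

Lemma ord_dist_in {n : nat} {i j : 'I_n} : (i < j)%N -> (0 < j - i < n)%N.
Proof. by move=> ij; have := ltn_ord j; lia. Qed.

Section CyclicPoint.
Context {R : realType} {n : nat}.

Lemma plucker_cyclic {i j : 'I_n} : (i <= j)%N ->
  plucker (cyclicC R n) i j = sinfrac R n (j - i).
Proof.
by move=> ij; rewrite /plucker /cyclicC !mxE /= /sinfrac natrB // !mulrBl sinB; ring.
Qed.

Lemma cyclic_totally_positive : totally_positive (cyclicC R n).
Proof.
by move=> i j ij; rewrite (plucker_cyclic (ltnW ij)); apply/sinfrac_gt0/ord_dist_in.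
Qed.

Hypotheses (n_ge3 : (3 <= n)%N) (n_odd : odd n).

Let half_in : (0 < n./2 < n)%N.
Proof.
have n_eq : n = (n./2).*2.+1 by rewrite -{1}(odd_double_half n) n_odd.
lia.
Qed.

Let plucker_cyclic_bounds {i j : 'I_n} : (i < j)%N ->
  sinfrac R n 1 <= plucker (cyclicC R n) i j <= sinfrac R n n./2.
Proof.
by move=> ij; rewrite (plucker_cyclic (ltnW ij)); exact: sinfrac_bounds _ n_odd (ord_dist_in ij).
Qed.

Lemma max_plucker_cyclic : max_plucker (cyclicC R n) = sinfrac R n n./2.
Proof.
apply/le_anti/andP; split.
  apply: bigmax_le => [|[i j] /= ij]; first exact/ltW/sinfrac_gt0.
  by case/andP: (plucker_cyclic_bounds ij).
have n_gt0 : (0 < n)%N by lia.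
case/andP: half_in => half_gt0 half_lt.
have := plucker_bounds (cyclicC R n) (Ordinal n_gt0) (Ordinal half_lt) half_gt0.
by rewrite plucker_cyclic //= subn0 => /andP[].
Qed.

Lemma min_plucker_cyclic : min_plucker (cyclicC R n) = sinfrac R n 1.
Proof.
have n_gt1 : (1 < n)%N by lia.
apply/le_anti/andP; split.
  have := plucker_bounds (cyclicC R n) (Ordinal (ltnW n_gt1)) (Ordinal n_gt1) isT.
  by rewrite plucker_cyclic //= subn0 => /andP[].
apply: le_bigmin => [|[i j] /= ij]; last by case/andP: (plucker_cyclic_bounds ij).
by rewrite max_plucker_cyclic; case/andP: (@sinfrac_bounds R n _ n_odd half_in).
Qed.

End CyclicPoint.

(* ln x <= x - 1 on (0, +oo), with equality only at x = 1: the tangent-line bound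
   behind the AM-GM inequality. *)
Lemma ln_le_subr1 {R : realType} (x : R) : 0 < x -> ln x <= x - 1.
Proof.
move=> x_gt0; have tangent := expR_ge1Dx (ln x).
by rewrite lnK ?posrE // in tangent; lra.
Qed.

Lemma ln_eq_subr1 {R : realType} (x : R) : 0 < x -> ln x = x - 1 -> x = 1.
Proof.
move=> x_gt0 eq_ln; apply/eqP; rewrite -ln_eq0 //; apply/negPn/negP => /expR_gt1Dx.
by rewrite lnK ?posrE // eq_ln subrKC ltxx.
Qed.

Definition geomean {R : realType} (n : nat) (f : nat -> R) : R :=
  expR ((\sum_(s < n) ln (f s)) / n%:R).

Section GeometricMean.
Context {R : realType} {n : nat}.
Implicit Types (f g : nat -> R) (a : R).

Local Notation sum_ln f := (\sum_(s < n) ln (f s)).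

Lemma geomean_gt0 f : 0 < geomean n f.
Proof. exact: expR_gt0. Qed.

Lemma eq_geomean f g : (forall s, (s < n)%N -> f s = g s) -> geomean n f = geomean n g.
Proof.
by move=> fg; rewrite /geomean (eq_bigr (fun s : 'I_n => ln (g s))) // => s _; rewrite fg.
Qed.

Lemma geomeanM f g : (forall s, (s < n)%N -> 0 < f s) -> (forall s, (s < n)%N -> 0 < g s) ->
  geomean n (fun s => f s * g s) = geomean n f * geomean n g.
Proof.
move=> f_gt0 g_gt0; rewrite /geomean -expRD -mulrDl -big_split /=.
by rewrite (eq_bigr (fun s : 'I_n => ln (f s) + ln (g s))) // => s _; rewrite lnM // posrE;
  [exact: f_gt0 | exact: g_gt0].
Qed.

Lemma geomean_shift f d : (forall s, f (s + n)%N = f s) ->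
  geomean n (fun s => f (s + d)%N) = geomean n f.
Proof.
move=> f_per; elim: d => [|d IH]; first by apply: eq_geomean => s _; rewrite addn0.
rewrite -IH /geomean /=.
suff -> : \sum_(s < n) ln (f (s + d.+1)%N) = \sum_(s < n) ln (f (s + d)%N) by [].
case: n f_per => [|m] f_per; first by rewrite !big_ord0.
rewrite big_ord_recr [RHS]big_ord_recl /= -addSnnS addnC f_per add0n addrC.
by congr (_ + _); apply: eq_bigr => s _; rewrite addSnnS.
Qed.

Hypothesis n_gt0 : (0 < n)%N.

Let n_neq0 : (n%:R : R) != 0. Proof. by rewrite pnatr_eq0 -lt0n. Qed.

Lemma geomean_const {a} : 0 < a -> geomean n (fun=> a) = a.
Proof.
move=> a_gt0; rewrite /geomean sumr_const card_ord -[_ *+ n]mulr_natr mulfK //.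
by rewrite lnK ?posrE.
Qed.

Lemma ler_geomeanE f g : (geomean n f <= geomean n g) = (sum_ln f <= sum_ln g).
Proof. by rewrite ler_expR ler_pM2r // invr_gt0 ltr0n. Qed.

Lemma eq_geomeanE f g : (geomean n f == geomean n g) = (sum_ln f == sum_ln g).
Proof. by rewrite !eq_le !ler_geomeanE. Qed.

Lemma ler_geomean f g : (forall s, (s < n)%N -> 0 < f s <= g s) ->
  geomean n f <= geomean n g.
Proof.
move=> fg; rewrite ler_geomeanE; apply: ler_sum => s _.
by case/andP: (fg s (ltn_ord s)) => f_gt0 fg_s; rewrite ler_ln ?posrE // (lt_le_trans f_gt0).
Qed.

Lemma ler_geomean_eq f g : (forall s, (s < n)%N -> 0 < f s <= g s) ->
  geomean n f = geomean n g -> forall s, (s < n)%N -> f s = g s.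
Proof.
move=> fg /eqP; rewrite eq_geomeanE eq_sym -subr_eq0 -sumrB => /eqP sum0 s sn.
have g_gt0 t : (t < n)%N -> 0 < g t.
  by move=> tn; case/andP: (fg t tn) => f_gt0; apply: lt_le_trans.
have diff_ge0 (t : 'I_n) : true -> 0 <= ln (g t) - ln (f t).
  by case/andP: (fg t (ltn_ord t)) => f_gt0 fg_t _; rewrite subr_ge0 ler_ln ?posrE ?g_gt0.
have /eqP := psumr_eq0P diff_ge0 sum0 (i := Ordinal sn) isT; rewrite subr_eq0 => /eqP /esym eq_ln.
by case/andP: (fg s sn) => f_gt0 _; apply: (ln_inj _ _ eq_ln); rewrite posrE // g_gt0.
Qed.

Lemma amgm f : (forall s, (s < n)%N -> 0 < f s) ->
  let a := (\sum_(s < n) f s) / n%:R in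
  geomean n f <= a /\ (geomean n f = a -> forall s, (s < n)%N -> f s = a).
Proof.
move=> f_gt0 a.
have sum_gt0 : 0 < \sum_(s < n) f s.
  rewrite (bigD1 (Ordinal n_gt0)) //= ltr_pwDl ?f_gt0 //.
  by rewrite sumr_ge0 // => s _; rewrite ltW ?f_gt0.
have a_gt0 : 0 < a by rewrite divr_gt0 ?ltr0n.
(* gap s = (f s/a - 1) - ln (f s/a) >= 0, and the gaps sum to n ln a - sum ln f. *)
pose gap s := f s / a - 1 - (ln (f s) - ln a).
have ln_ratio s : (s < n)%N -> ln (f s) - ln a = ln (f s / a).
  by move=> sn; rewrite ln_div ?posrE ?f_gt0.
have gap_ge0 (s : 'I_n) : true -> 0 <= gap s.
  by move=> _; rewrite /gap subr_ge0 ln_ratio // ln_le_subr1 // divr_gt0 ?f_gt0.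
have sum_ratio : \sum_(s < n) f s / a = n%:R.
  by rewrite -mulr_suml /a invfM invrK mulrA mulfV ?mul1r // gt_eqF.
have sum_gap : \sum_(s < n) gap s = ln a *+ n - sum_ln f.
  by rewrite !sumrB sum_ratio !sumr_const card_ord subrr sub0r opprB.
split.
  rewrite -[X in _ <= X](geomean_const a_gt0) ler_geomeanE sumr_const card_ord.
  by rewrite -subr_ge0 -sum_gap sumr_ge0.
move=> /eqP; rewrite -[X in _ == X](geomean_const a_gt0) eq_geomeanE sumr_const card_ord.
rewrite eq_sym -subr_eq0 -sum_gap => /eqP gaps0 s sn.
have /eqP := psumr_eq0P gap_ge0 gaps0 (i := Ordinal sn) isT.
rewrite /gap ln_ratio // subr_eq0 => /eqP /esym /ln_eq_subr1 ratio1.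
by rewrite -(divfK (lt0r_neq0 a_gt0) (f s)) ratio1 ?mul1r // divr_gt0 ?f_gt0.
Qed.

(* Superadditivity G(f) + G(g) <= G(f + g): apply AM-GM to the ratios f/(f+g) and g/(f+g),
   whose arithmetic means add up to 1.  In the equality case f/(f+g) is constant. *)
Lemma geomean_superadditive f g :
  (forall s, (s < n)%N -> 0 < f s) -> (forall s, (s < n)%N -> 0 < g s) ->
  geomean n f + geomean n g <= geomean n (fun s => f s + g s) /\
  (geomean n (fun s => f s + g s) = geomean n f + geomean n g ->
   forall s, (s < n)%N -> f s / (f s + g s) = (\sum_(t < n) f t / (f t + g t)) / n%:R).
Proof.
move=> f_gt0 g_gt0; pose h s := f s + g s.
have h_gt0 s : (s < n)%N -> 0 < h s by move=> sn; rewrite addr_gt0 ?f_gt0 ?g_gt0.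
pose x s := f s / h s; pose y s := g s / h s.
have x_gt0 s : (s < n)%N -> 0 < x s by move=> sn; rewrite divr_gt0 ?f_gt0 ?h_gt0.
have y_gt0 s : (s < n)%N -> 0 < y s by move=> sn; rewrite divr_gt0 ?g_gt0 ?h_gt0.
have Gf : geomean n f = geomean n x * geomean n h.
  by rewrite -geomeanM //; apply: eq_geomean => s sn; rewrite divfK ?lt0r_neq0 ?h_gt0.
have Gg : geomean n g = geomean n y * geomean n h.
  by rewrite -geomeanM //; apply: eq_geomean => s sn; rewrite divfK ?lt0r_neq0 ?h_gt0.
have means1 : (\sum_(s < n) x s) / n%:R + (\sum_(s < n) y s) / n%:R = 1.
  rewrite -mulrDl -big_split /= (eq_bigr (fun=> 1)) => [|s _].
    by rewrite sumr_const card_ord divff.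
  by rewrite -mulrDl divff ?lt0r_neq0 ?h_gt0.
have [Gx_le Gx_eq] := amgm _ x_gt0; have [Gy_le _] := amgm _ y_gt0.
have Gh_gt0 := geomean_gt0 h.
split.
  by rewrite Gf Gg -mulrDl -[X in _ <= X]mul1r ler_pM2r // -means1 lerD.
move=> GfDg; apply: Gx_eq.
have Gsum : geomean n x + geomean n y = 1.
  by apply: (mulIf (lt0r_neq0 Gh_gt0)); rewrite mul1r mulrDl -Gf -Gg.
lra.
Qed.

End GeometricMean.

Section MinimumPrinciple.
Context {R : realType} {n : nat} {r c : nat -> R}.
Hypotheses (c0 : c 0%N = 0) (cn : c n = 0) (r0 : r 0%N = 0) (rn : r n = 0).
Hypotheses (c_gt0 : forall d, (0 < d < n)%N -> 0 < c d)
           (r_gt0 : forall d, (0 < d < n)%N -> 0 < r d).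
Hypotheses (c_eq : forall d, (0 < d < n)%N -> c d ^+ 2 - c d.+1 * c d.-1 = 1)
           (r_ge : forall d, (0 < d < n)%N -> 1 <= r d ^+ 2 - r d.+1 * r d.-1).

(* Compare at a minimiser d0 of r/c: if the minimum z were < 1, then
   r_(d0)^2 - r_(d0+1) r_(d0-1) <= z^2 (c_(d0)^2 - c_(d0+1) c_(d0-1)) = z^2 < 1. *)
Lemma minimum_principle {d : nat} : (0 < d < n)%N -> c d <= r d.
Proof.
move=> d_in; have n_gt1 : (1 < n)%N by lia.
pose z e := r e / c e.
case: (@arg_minP _ _ 'I_n (Ordinal n_gt1) (fun i : 'I_n => (0 < i)%N) (fun i => z i) isT)
  => d0 /= d0_gt0 d0_min.
have d0_in : (0 < d0 < n)%N by rewrite d0_gt0 ltn_ord.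
set m := z d0.
have z_min e : (0 < e < n)%N -> m <= z e.
  by case/andP=> e_gt0 en; apply: (d0_min (Ordinal en)).
have rE e : (0 < e < n)%N -> r e = z e * c e.
  by move=> e_in; rewrite divfK ?lt0r_neq0 ?c_gt0.
have [m_ge1|m_lt1] := leP 1 m.
  by rewrite rE // -[X in X <= _]mul1r ler_pM2r ?c_gt0 // (le_trans m_ge1) ?z_min.
exfalso; have m_gt0 : 0 < m by rewrite divr_gt0 ?r_gt0 ?c_gt0.
have below e : (e <= n)%N -> 0 <= m * c e <= r e.
  move=> en; have [->|e_gt0] := posnP e; first by rewrite c0 r0 mulr0 lexx.
  case: (ltngtP e n) en => // [e_lt _|-> _]; last by rewrite cn rn mulr0 lexx.
  have e_in : (0 < e < n)%N by rewrite e_gt0 e_lt.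
  apply/andP; split; first by apply: mulr_ge0; apply: ltW => //; apply: c_gt0.
  by rewrite rE // ler_pM2r ?c_gt0 ?z_min.
have /andP [p_ge0 p_le] := below d0.+1 (ltn_ord d0).
have /andP [q_ge0 q_le] := below d0.-1 (leq_trans (leq_pred _) (ltnW (ltn_ord d0))).
have prod_le : (m * c d0.+1) * (m * c d0.-1) <= r d0.+1 * r d0.-1 by rewrite ler_pM.
have r_d0 := r_ge _ d0_in; rewrite (rE _ d0_in) -/m in r_d0.
have /= c_d0 := congr1 (fun x => m ^+ 2 * x) (c_eq _ d0_in).
have m2_lt1 : m ^+ 2 < 1 by rewrite expr_lt1 ?ltW.
nra.
Qed.

(* Rigidity: where r touches c at an interior point, it touches it at both neighbours,
   since r_(d+1) r_(d-1) <= c_(d+1) c_(d-1) while r >= c > 0 there. *)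
Lemma touching_propagates {d : nat} : (1 < d)%N -> (d.+1 < n)%N -> r d = c d ->
  r d.-1 = c d.-1 /\ r d.+1 = c d.+1.
Proof.
move=> d_gt1 dn rd.
have dm_in : (0 < d.-1 < n)%N by lia.
have dp_in : (0 < d.+1 < n)%N by lia.
have d_in : (0 < d < n)%N by lia.
have cm_gt0 := c_gt0 _ dm_in; have cp_gt0 := c_gt0 _ dp_in.
have cm_le := minimum_principle dm_in; have cp_le := minimum_principle dp_in.
have prod_le : r d.+1 * r d.-1 <= c d.+1 * c d.-1.
  by have r_d := r_ge _ d_in; have c_d := c_eq _ d_in; rewrite rd in r_d; lra.
by split; apply/le_anti/andP; split => //; nra.
Qed.

Lemma touching_spreads k : n = k.*2.+1 ->
  (forall d, (0 < d < n)%N -> r (n - d)%N = r d) ->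
  (forall d, (0 < d < n)%N -> c (n - d)%N = c d) ->
  r k = c k -> forall d, (0 < d < n)%N -> r d = c d.
Proof.
move=> n_eq r_sym c_sym rk.
have down e : (e < k)%N -> r (k - e)%N = c (k - e)%N.
  elim: e => [|e IH] ek; first by rewrite subn0.
  have ke_gt1 : (1 < k - e)%N by lia.
  have ke_lt : ((k - e).+1 < n)%N by lia.
  have [touch_below _] := touching_propagates ke_gt1 ke_lt (IH (ltnW ek)).
  by rewrite subnS.
move=> d d_in; have [dk|kd] := leqP d k.
  have kd_lt : (k - d < k)%N by lia.
  by have := down _ kd_lt; rewrite subKn.
rewrite -r_sym // -c_sym //.
have knd_lt : (k - (n - d) < k)%N by lia.
by have := down _ knd_lt; rewrite subKn //; lia.
Qed.

End MinimumPrinciple.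

Lemma periodic_mod {T : Type} {n : nat} {f : nat -> T} :
  (forall s, f (s + n)%N = f s) -> forall s, f s = f (s %% n)%N.
Proof.
move=> f_per s; rewrite {1}(divn_eq s n) addnC.
by elim: (s %/ n)%N => [|q IH]; rewrite ?mul0n ?addn0 // mulSn addnCA addnC f_per.
Qed.

(* Column t of the anti-periodic extension of X: column (t mod n), negated when
   floor (t / n) is odd.  All its 2x2 minors of columns s < t < s + n are Pluecker
   coordinates of X up to sign. *)
Definition twcol {R : realType} {n : nat} (X : 'M[R]_(2, n)) (r : 'I_2) (t : nat) : R :=
  (if odd (t %/ n) then -1 else 1) * oapp (X r) 0 (insub (t %% n)%N : option 'I_n).

Definition twminor {R : realType} {n : nat} (X : 'M[R]_(2, n)) (s t : nat) : R :=
  twcol X 0 s * twcol X 1 t - twcol X 0 t * twcol X 1 s.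

Definition chord {R : realType} {n : nat} (X : 'M[R]_(2, n)) (d s : nat) : R :=
  twminor X s (s + d).

Section AntiPeriodicExtension.
Context {R : realType} {n : nat} (X : 'M[R]_(2, n)).

Lemma twcol_ord r (i : 'I_n) : twcol X r i = X r i.
Proof. by rewrite /twcol divn_small ?modn_small ?ltn_ord //= mul1r valK. Qed.

Lemma twminor_ord (i j : 'I_n) : twminor X i j = plucker X i j.
Proof. by rewrite /twminor !twcol_ord. Qed.

Lemma twminorC s t : twminor X t s = - twminor X s t.
Proof. by rewrite /twminor; ring. Qed.

(* The Pluecker relation among the six minors of four columns s, s+1, s+d, s+d+1. *)
Lemma chord_plucker_relation d s : (0 < d)%N ->
  chord X d s * chord X d s.+1 =
  chord X 1 s * chord X 1 (s + d) + chord X d.+1 s * chord X d.-1 s.+1.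
Proof.
case: d => [//|d] _; rewrite /chord /twminor !addn1 !addSn !addnS; ring.
Qed.

Hypothesis n_gt0 : (0 < n)%N.

Lemma twcol_antiperiodic r t : twcol X r (t + n) = - twcol X r t.
Proof.
rewrite /twcol divnDr ?dvdnn // divnn n_gt0 addn1 /= modnDr.
by case: (odd _); rewrite ?mulN1r ?mul1r ?opprK.
Qed.

Lemma twminor_shiftl s t : twminor X (s + n) t = - twminor X s t.
Proof. by rewrite /twminor !twcol_antiperiodic; ring. Qed.

Lemma twminor_shiftr s t : twminor X s (t + n) = - twminor X s t.
Proof. by rewrite /twminor !twcol_antiperiodic; ring. Qed.

Lemma chord_periodic d s : chord X d (s + n) = chord X d s.
Proof. by rewrite /chord addnAC twminor_shiftl twminor_shiftr opprK. Qed.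

Lemma chord_reflect d s : (d <= n)%N -> chord X (n - d) (s + d) = chord X d s.
Proof.
by move=> dn; rewrite /chord -addnA subnKC // twminor_shiftr twminorC opprK.
Qed.

Lemma chord_plucker d s : (0 < d < n)%N ->
  exists i j : 'I_n, (i < j)%N /\ chord X d s = plucker X i j.
Proof.
move=> /andP [d_gt0 dn]; rewrite (periodic_mod (chord_periodic d)).
have sn : (s %% n < n)%N := ltn_pmod s n_gt0.
set s' := (s %% n)%N in sn *; rewrite /chord.
have [sd_lt|sd_ge] := ltnP (s' + d) n.
  by exists (Ordinal sn), (Ordinal sd_lt); split; [rewrite /=; lia | rewrite -twminor_ord].
have sdn_lt : (s' + d - n < n)%N by lia.
exists (Ordinal sdn_lt), (Ordinal sn); split; first by rewrite /=; lia.
by rewrite -twminor_ord /= -{1}(subnK sd_ge) twminor_shiftr twminorC opprK.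
Qed.

End AntiPeriodicExtension.

(* c_d = sin (d pi / n) / sin (pi / n), the normalised Pluecker coordinates of C. *)
Definition cyclic_ratio (R : realType) (n d : nat) : R := sinfrac R n d / sinfrac R n 1.

Section CyclicRatio.
Context {R : realType} {n : nat}.
Hypothesis n_gt1 : (1 < n)%N.

Let s1_gt0 : 0 < sinfrac R n 1. Proof. by apply: sinfrac_gt0; rewrite n_gt1. Qed.

Lemma cyclic_ratio_gt0 d : (0 < d < n)%N -> 0 < cyclic_ratio R n d.
Proof. by move=> d_in; rewrite divr_gt0 ?sinfrac_gt0. Qed.

Lemma cyclic_ratio0 : cyclic_ratio R n 0 = 0.
Proof. by rewrite /cyclic_ratio sinfrac0 mul0r. Qed.

Lemma cyclic_ratio_n : cyclic_ratio R n n = 0.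
Proof. by rewrite /cyclic_ratio sinfrac_n ?mul0r // ltnW. Qed.

Lemma cyclic_ratioB d : (d <= n)%N -> cyclic_ratio R n (n - d) = cyclic_ratio R n d.
Proof. by move=> dn; rewrite /cyclic_ratio sinfracB // ltnW. Qed.

Lemma cyclic_ratio1 : cyclic_ratio R n 1 = 1.
Proof. by rewrite /cyclic_ratio divff ?lt0r_neq0. Qed.

Lemma cyclic_ratio_eq d : (0 < d)%N ->
  cyclic_ratio R n d ^+ 2 - cyclic_ratio R n d.+1 * cyclic_ratio R n d.-1 = 1.
Proof.
move=> d_gt0; have s1_neq0 := lt0r_neq0 s1_gt0.
apply: (mulIf (expf_neq0 2 s1_neq0)); rewrite mul1r -[in RHS](sinfrac_recurrence _ d_gt0).
by rewrite /cyclic_ratio; field.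
Qed.

End CyclicRatio.

Section CoreEstimate.
Context {R : realType} {n : nat} (X : 'M[R]_(2, n)).
Hypotheses (n_ge3 : (3 <= n)%N) (tpX : totally_positive X).

Local Notation m := (min_plucker X).
Local Notation M := (max_plucker X).
Local Notation G d := (geomean n (chord X d)).
Local Notation c := (cyclic_ratio R n).

Let n_gt0 : (0 < n)%N. Proof. lia. Qed.
Let n_gt1 : (1 < n)%N. Proof. lia. Qed.
Let m_gt0 : 0 < m. Proof. exact: min_plucker_gt0. Qed.

Lemma chord_bounds {d : nat} (s : nat) : (0 < d < n)%N -> m <= chord X d s <= M.
Proof.
by move=> d_in; have [i [j [ij ->]]] := chord_plucker X n_gt0 _ s d_in; exact: plucker_bounds.
Qed.

Lemma chord_gt0 {d : nat} (s : nat) : (0 < d < n)%N -> 0 < chord X d s.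
Proof.
by move=> d_in; case/andP: (chord_bounds s d_in) => m_le _; apply: lt_le_trans m_le.
Qed.

Lemma chord_mean_bounds {d : nat} : (0 < d < n)%N -> m <= G d <= M.
Proof.
move=> d_in; apply/andP; split.
  rewrite -[Z in Z <= _](geomean_const n_gt0 m_gt0); apply: (ler_geomean n_gt0) => s _.
  by rewrite m_gt0; case/andP: (chord_bounds s d_in).
have M_gt0 : 0 < M.
  by case/andP: (chord_bounds 0 d_in) => _; apply: lt_le_trans (chord_gt0 0 d_in).
rewrite -[Z in _ <= Z](geomean_const n_gt0 M_gt0); apply: (ler_geomean n_gt0) => s _.
by rewrite chord_gt0 //; case/andP: (chord_bounds s d_in).
Qed.

Lemma chord_mean_reflect {d : nat} : (d <= n)%N -> G (n - d) = G d.
Proof.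
move=> dn; rewrite -(geomean_shift _ d (chord_periodic X n_gt0 (n - d))).
by apply: eq_geomean => s _; rewrite chord_reflect.
Qed.

Lemma chord_mean_sq {d : nat} : (0 < d < n)%N -> G d * G d =
  geomean n (fun s => chord X 1 s * chord X 1 (s + d) + chord X d.+1 s * chord X d.-1 s.+1).
Proof.
move=> d_in; rewrite -[Z in _ * Z](geomean_shift _ 1 (chord_periodic X n_gt0 d)).
rewrite -geomeanM => [|s _|s _]; try exact: chord_gt0.
by apply: eq_geomean => s _; rewrite addn1 chord_plucker_relation //; case/andP: d_in.
Qed.

Lemma chord_mean_neighbours {d : nat} : (1 < d)%N -> (d.+1 < n)%N ->
  geomean n (fun s => chord X d.+1 s * chord X d.-1 s.+1) = G d.+1 * G d.-1.
Proof.
move=> d_gt1 dn; have dp_in : (0 < d.+1 < n)%N by lia.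
have dm_in : (0 < d.-1 < n)%N by lia.
rewrite geomeanM => [|s _|s _]; try exact: chord_gt0.
congr (_ * _); rewrite -(geomean_shift _ 1 (chord_periodic X n_gt0 d.-1)).
by apply: eq_geomean => s _; rewrite addn1.
Qed.

Lemma chord_mean_chain {d : nat} : (1 < d)%N -> (d.+1 < n)%N ->
  m * m + G d.+1 * G d.-1 <= G d * G d.
Proof.
move=> d_gt1 dn; have d_in : (0 < d < n)%N by lia.
have one_in : (0 < 1 < n)%N by rewrite n_gt1.
have dp_in : (0 < d.+1 < n)%N by lia.
have dm_in : (0 < d.-1 < n)%N by lia.
have [super _] := geomean_superadditive n_gt0 _ _
  (fun s _ => mulr_gt0 (chord_gt0 s one_in) (chord_gt0 (s + d) one_in))
  (fun s _ => mulr_gt0 (chord_gt0 s dp_in) (chord_gt0 s.+1 dm_in)).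
rewrite chord_mean_sq // -chord_mean_neighbours //; apply: le_trans super; rewrite lerD2r.
rewrite -[Z in Z <= _](geomean_const n_gt0 (mulr_gt0 m_gt0 m_gt0)).
apply: (ler_geomean n_gt0) => s _; apply/andP; split; first exact: mulr_gt0.
have /andP [m_le1 _] := chord_bounds s one_in.
have /andP [m_le2 _] := chord_bounds (s + d) one_in.
exact: ler_pM (ltW m_gt0) (ltW m_gt0) m_le1 m_le2.
Qed.

Definition mean_profile (d : nat) : R := if (0 < d < n)%N then G d / m else 0.

Lemma mean_profileE d : (0 < d < n)%N -> mean_profile d = G d / m.
Proof. by rewrite /mean_profile => ->. Qed.

Lemma mean_profile_ge1 {d : nat} : (0 < d < n)%N -> 1 <= mean_profile d.
Proof.
by move=> d_in; rewrite mean_profileE // ler_pdivlMr // mul1r; case/andP: (chord_mean_bounds d_in).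
Qed.

(* r satisfies the inequality r_d^2 - r_(d+1) r_(d-1) >= 1 of the minimum principle;
   at d = 1 and d = n - 1 one neighbour vanishes and r_d >= 1 suffices. *)
Lemma mean_profile_defect d : (0 < d < n)%N ->
  1 <= mean_profile d ^+ 2 - mean_profile d.+1 * mean_profile d.-1.
Proof.
move=> d_in; have r_ge1 := mean_profile_ge1 d_in.
have [d1|d_gt1] := leqP d 1.
  have -> : mean_profile d.-1 = 0 by rewrite /mean_profile; have -> : d.-1 = 0%N by lia.
  by rewrite mulr0 subr0 expr2; nra.
have [dn|dn] := leqP n d.+1.
  have -> : mean_profile d.+1 = 0 by rewrite /mean_profile; have -> : (d.+1 < n)%N = false by lia.
  by rewrite mul0r subr0 expr2; nra.
have dp_in : (0 < d.+1 < n)%N by lia.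
have dm_in : (0 < d.-1 < n)%N by lia.
have chain := chord_mean_chain d_gt1 dn.
rewrite !mean_profileE //.
have -> : (G d / m) ^+ 2 - G d.+1 / m * (G d.-1 / m) =
    (G d * G d - G d.+1 * G d.-1) / (m * m) by field; exact: lt0r_neq0.
by rewrite ler_pdivlMr ?mulr_gt0 // mul1r; lra.
Qed.

Let profile0 : mean_profile 0 = 0. Proof. by []. Qed.
Let profile_n : mean_profile n = 0. Proof. by rewrite /mean_profile ltnn andbF. Qed.
Let profile_gt0 e : (0 < e < n)%N -> 0 < mean_profile e.
Proof. by move=> e_in; apply: lt_le_trans (mean_profile_ge1 e_in). Qed.
Let profile_eq e : (0 < e < n)%N -> c e ^+ 2 - c e.+1 * c e.-1 = 1.
Proof. by case/andP=> e_gt0 _; exact: cyclic_ratio_eq. Qed.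

Lemma cyclic_le_chord_mean {d : nat} : (0 < d < n)%N -> m * c d <= G d.
Proof.
move=> d_in; rewrite mulrC -ler_pdivlMr // -mean_profileE //.
exact: (minimum_principle cyclic_ratio0 (cyclic_ratio_n n_gt1) profile0 profile_n
  (cyclic_ratio_gt0 n_gt1) profile_gt0 profile_eq mean_profile_defect d_in).
Qed.

Lemma core_estimate {k : nat} : (0 < k < n)%N -> m * c k <= M.
Proof.
move=> k_in; case/andP: (chord_mean_bounds k_in) => _.
exact: le_trans (cyclic_le_chord_mean k_in).
Qed.

Section EqualityCase.
Hypotheses (n_odd : odd n) (extremal : M = m * c n./2).

Let n_eq : n = (n./2).*2.+1. Proof. by rewrite -{1}(odd_double_half n) n_odd. Qed.
Let half_in : (0 < n./2 < n)%N. Proof. by move: n_ge3; rewrite n_eq; lia. Qed.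

(* The profile touches c at the centre n/2, hence everywhere. *)
Lemma extremal_chord_mean {d : nat} : (0 < d < n)%N -> G d = m * c d.
Proof.
have G_half : G n./2 = m * c n./2.
  apply/le_anti; rewrite cyclic_le_chord_mean // andbT -extremal.
  by case/andP: (chord_mean_bounds half_in).
have profile_sym e : (0 < e < n)%N -> mean_profile (n - e) = mean_profile e.
  by move=> e_in; rewrite !mean_profileE ?chord_mean_reflect //; lia.
have c_sym e : (0 < e < n)%N -> c (n - e) = c e.
  by case/andP=> _ /ltnW; exact: cyclic_ratioB.
have touch_half : mean_profile n./2 = c n./2.
  by rewrite mean_profileE // G_half mulrC mulKf ?lt0r_neq0.
move=> d_in; have := touching_spreads cyclic_ratio0 (cyclic_ratio_n n_gt1) profile0 profile_n
  (cyclic_ratio_gt0 n_gt1) profile_gt0 profile_eq mean_profile_defect _ n_eq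
  profile_sym c_sym touch_half _ d_in.
by rewrite mean_profileE // => <-; rewrite mulrC divfK ?lt0r_neq0.
Qed.

Let one_in : (0 < 1 < n)%N. Proof. by rewrite n_gt1. Qed.

(* G_1 = m while every chord of length 1 is >= m: all of them equal m. *)
Lemma extremal_chord1 s : chord X 1 s = m.
Proof.
rewrite (periodic_mod (chord_periodic X n_gt0 1)); symmetry.
apply: (ler_geomean_eq n_gt0 (fun=> m) (chord X 1) _ _ _ (ltn_pmod s n_gt0)) => [t _|].
  by rewrite m_gt0; case/andP: (chord_bounds t one_in).
by rewrite geomean_const // extremal_chord_mean // cyclic_ratio1 // mulr1.
Qed.

(* Tightness of superadditivity in the chain inequality: the products
   a_(d+1)(s) a_(d-1)(s+1) do not depend on s. *)
Lemma extremal_neighbours {d : nat} s : (1 < d)%N -> (d.+1 < n)%N ->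
  chord X d.+1 s * chord X d.-1 s.+1 = chord X d.+1 0 * chord X d.-1 1.
Proof.
move=> d_gt1 dn; have d_in : (0 < d < n)%N by lia.
have dp_in : (0 < d.+1 < n)%N by lia.
have dm_in : (0 < d.-1 < n)%N by lia.
pose B t := chord X d.+1 t * chord X d.-1 t.+1.
have B_gt0 t : (t < n)%N -> 0 < B t by move=> _; rewrite mulr_gt0 ?chord_gt0.
have mm_gt0 : 0 < m * m by rewrite mulr_gt0.
have B_per t : B (t + n)%N = B t by rewrite /B -addSn !chord_periodic.
have [_ tight] := geomean_superadditive n_gt0 (fun=> m * m) B (fun _ _ => mm_gt0) B_gt0.
have sq_eq : geomean n (fun t => m * m + B t) = G d * G d.
  by rewrite chord_mean_sq //; apply: eq_geomean => t _; rewrite !extremal_chord1.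
have sum_eq : geomean n (fun t => m * m + B t) = geomean n (fun=> m * m) + geomean n B.
  have c_d := profile_eq _ d_in.
  rewrite sq_eq geomean_const // chord_mean_neighbours // !extremal_chord_mean //.
  by nra.
have ratio := tight sum_eq; rewrite -/(B s) -/(B 0) (periodic_mod B_per).
have := ratio _ (ltn_pmod s n_gt0); rewrite -(ratio 0%N n_gt0).
move/(congr1 GRing.inv); rewrite !invf_div => /(congr1 (fun x => x * (m * m))).
by rewrite !divfK ?lt0r_neq0 // => /addrI.
Qed.

(* Hence chords of odd length are constant in s, by induction on the length ... *)
Lemma extremal_odd_chord j s : (j.*2.+1 < n)%N -> chord X j.*2.+1 s = chord X j.*2.+1 0.
Proof.
elim: j s => [|j IH] s jn; first by rewrite !extremal_chord1.
have j_lt : (j.*2.+1 < n)%N by move: jn; rewrite doubleS; lia.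
have d_gt1 : (1 < j.*2.+2)%N by [].
have dn : (j.*2.+3 < n)%N by move: jn; rewrite doubleS.
have := extremal_neighbours s d_gt1 dn; rewrite /= (IH s.+1 j_lt) (IH 1%N j_lt) doubleS.
by apply: mulIf; rewrite lt0r_neq0 // chord_gt0 //; lia.
Qed.

(* ... and, n being odd, every chord is the reflection of a chord of odd length. *)
Lemma extremal_chord_const {d : nat} s : (0 < d < n)%N -> chord X d s = chord X d 0.
Proof.
move=> d_in; case/boolP: (odd d) => d_odd.
  have d_eq : d = (d./2).*2.+1 by rewrite -{1}(odd_double_half d) d_odd.
  by rewrite d_eq extremal_odd_chord // -d_eq; case/andP: d_in.
have dn : (d <= n)%N by case/andP: d_in => _ /ltnW.
have nd_eq : (n - d = ((n - d)./2).*2.+1)%N.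
  by rewrite -{1}(odd_double_half (n - d)) oddB // n_odd (negbTE d_odd).
rewrite -(chord_reflect X n_gt0 _ s dn) -[in RHS](chord_reflect X n_gt0 _ 0 dn).
by rewrite nd_eq !extremal_odd_chord // -nd_eq; lia.
Qed.

Lemma extremal_plucker {i j : 'I_n} : (i < j)%N -> plucker X i j = m * c (j - i).
Proof.
move=> ij; have d_in := ord_dist_in ij.
rewrite -twminor_ord -[Z in twminor _ _ Z](subnKC (ltnW ij)) -/(chord X (j - i) i).
rewrite extremal_chord_const // -extremal_chord_mean //.
rewrite -[LHS](geomean_const n_gt0 (chord_gt0 0 d_in)).
by apply: eq_geomean => s _; rewrite extremal_chord_const.
Qed.

End EqualityCase.

End CoreEstimate.

Section RowSpaceFromPlucker.
Context {R : realType} {n : nat}.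
Implicit Types X Y : 'M[R]_(2, n).

Lemma plucker_antisym X i j : plucker X j i = - plucker X i j.
Proof. by rewrite /plucker; ring. Qed.

(* Cramer's rule: every column is a combination of columns a and b with Pluecker
   coordinates as coefficients. *)
Lemma plucker_expand X (a b j : 'I_n) (r : 'I_2) :
  plucker X a b * X r j = plucker X j b * X r a + plucker X a j * X r b.
Proof.
rewrite /plucker; have [->|->] : r = 0 \/ r = 1.
  by case: r => [[|[|//]]] r_lt; [left|right]; apply/val_inj.
all: ring.
Qed.

Lemma submx_proportional_plucker X Y (lam : R) (a b : 'I_n) : lam != 0 ->
  (forall i j, plucker X i j = lam * plucker Y i j) -> plucker Y a b != 0 -> (X <= Y)%MS.
Proof.
move=> lam_neq0 XY Yab; pose P := \matrix_(r < 2, l < 2)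
  ((if l == 0 then X r a * Y 1 b - X r b * Y 1 a
    else X r b * Y 0 a - X r a * Y 0 b) / plucker Y a b).
suff -> : X = P *m Y by exact: submxMl.
apply/matrixP => r j; rewrite !mxE big_ord_recl big_ord1 !mxE /=.
have -> : lift ord0 ord0 = 1 :> 'I_2 by apply/val_inj.
have -> : ord0 = 0 :> 'I_2 by apply/val_inj.
have expand : plucker Y a b * X r j = plucker Y j b * X r a + plucker Y a j * X r b.
  by apply: (mulfI lam_neq0); rewrite mulrA -XY plucker_expand !XY; ring.
apply: (mulfI Yab); rewrite expand /plucker; field.
by move: Yab; rewrite /plucker.
Qed.

Lemma eqmx_proportional_plucker X Y (lam : R) (a b : 'I_n) : lam != 0 ->
  (forall i j : 'I_n, (i < j)%N -> plucker X i j = lam * plucker Y i j) ->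
  plucker Y a b != 0 -> (X == Y)%MS.
Proof.
move=> lam_neq0 XY Yab.
have {}XY i j : plucker X i j = lam * plucker Y i j.
  case: (ltngtP i j) => [/XY //|ji|/val_inj ->]; last by rewrite /plucker !subrr mulr0.
  by rewrite !(plucker_antisym _ j i) XY // mulrN.
apply/andP; split; first exact: submx_proportional_plucker lam_neq0 XY Yab.
apply: (submx_proportional_plucker _ _ lam^-1 a b).
- by rewrite invr_neq0.
- by move=> i j; rewrite XY mulKf.
- by rewrite XY mulf_neq0.
Qed.

End RowSpaceFromPlucker.

Theorem mainTheorem3 (R : realType) (n : nat) :
  (3 <= n)%N -> odd n ->
  [/\ totally_positive (cyclicC R n),
      (forall X : 'M[R]_(2, n), totally_positive X ->
         Eratio (cyclicC R n) <= Eratio X) &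
      (forall X : 'M[R]_(2, n), totally_positive X ->
         Eratio X = Eratio (cyclicC R n) -> (X == cyclicC R n)%MS)].
Proof.
move=> n_ge3 n_odd; have n_gt1 : (1 < n)%N by lia.
have half_in : (0 < n./2 < n)%N by rewrite -{2 3}(odd_double_half n) n_odd; lia.
have E_C : Eratio (cyclicC R n) = cyclic_ratio R n n./2.
  by rewrite /Eratio max_plucker_cyclic ?min_plucker_cyclic.
split; first exact: cyclic_totally_positive.
  move=> X tpX; rewrite E_C /Eratio ler_pdivlMr ?min_plucker_gt0 // mulrC.
  exact: core_estimate.
move=> X tpX; rewrite E_C /Eratio => E_eq.
have m_gt0 := min_plucker_gt0 X n_gt1 tpX.
have extremal : max_plucker X = min_plucker X * cyclic_ratio R n n./2.
  by rewrite -E_eq mulrC divfK ?lt0r_neq0.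
have s1_gt0 : 0 < sinfrac R n 1 by apply: sinfrac_gt0; rewrite n_gt1.
pose b : 'I_n := Ordinal n_gt1; pose a : 'I_n := Ordinal (ltnW n_gt1).
apply: (eqmx_proportional_plucker _ _ (min_plucker X / sinfrac R n 1) a b).
- by rewrite mulf_neq0 ?invr_neq0 ?lt0r_neq0.
- move=> i j ij; rewrite (extremal_plucker X n_ge3 tpX n_odd extremal ij).
  by rewrite (plucker_cyclic (ltnW ij)) /cyclic_ratio mulrA mulrAC.
- by rewrite plucker_cyclic // lt0r_neq0 // sinfrac_gt0.
Qed.
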